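(* Let $(X,\tau)$ be a locally convex-solid Riesz space with topological dual $X^*$, and let $X_+=\{x\in X: x\ge 0\}$ and $X^*_+=\{\xi\in X^*:\langle x,\xi\rangle\ge 0 \text{ for all } x\in X_+\}$. Assume that there exists a $\sigma(X^*,X)$-compact set $\Gamma\subset X^*_+$ such that the convex cone generated by $\Gamma$ is $\sigma(X^*,X)$-dense in $X^*_+$. Let $C\subset X$ be a convex cone satisfying $C\cap X_+=\{0\}$, and let $C^\circ=\{\xi\in X^*:\langle x,\xi\rangle\le 0 \text{ for all } x\in C\}$. Then for any $f\in X^*$ the following conditions are equivalent: (i) there exists a convex solid $\tau$-neighbourhood of zero $V$ such that $\sup_{x\in C_V}\langle x,f\rangle<+\infty$, where $C_V=\{x\in C: x^-\in V\}$; (ii) there exists $g\in C^\circ$ such that $g\ge f$.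
   Context: A locally convex-solid Riesz space is a vector lattice $X$ endowed with a linear topology $\tau$ having a local base at zero consisting of convex solid sets. A set $V\subset X$ is solid if $x\in V$ and $|y|\le|x|$ imply $y\in V$. For $x\in X$, $x^+$, $x^-$, $|x|$ denote its positive part, negative part and absolute value. $X^*$ is ordered by the dual cone $X^*_+$: $g\ge f$ means $g-f\in X^*_+$. $\sigma(X^*,X)$ denotes the weak-star topology on $X^*$. *)

From HB Require Import structures.
From mathcomp Require Import all_boot all_order all_algebra.
From mathcomp Require Import all_classical all_reals all_analysis.
Set Implicit Arguments. Unset Strict Implicit. Unset Printing Implicit Defensive.
Import Order.TTheory GRing.Theory Num.Theory numFieldTopology.Exports.
Local Open Scope classical_set_scope.
Local Open Scope ring_scope.

Section RieszDefs.
Variables (R : realType) (X : lmodType R).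
Variables (le : X -> X -> Prop) (join : X -> X -> X).

Definition is_riesz_space : Prop :=
  [/\ (forall x, le x x),
      (forall x y, le x y -> le y x -> x = y),
      (forall x y z, le x y -> le y z -> le x z) /\
      (forall x y z, le x y -> le (x + z) (y + z)),
      (forall (a : R) x y, 0 <= a -> le x y -> le (a *: x) (a *: y))
    & (forall x y, [/\ le x (join x y), le y (join x y) &
                     forall z, le x z -> le y z -> le (join x y) z])].

Definition rpos (x : X) : X := join x 0.
Definition rneg (x : X) : X := join (- x) 0.
Definition rabs (x : X) : X := join x (- x).

Definition solid (V : set X) : Prop :=
  forall x y, V x -> le (rabs y) (rabs x) -> V y.

Definition poscone : set X := [set x | le 0 x].

Definition convex_cone (C : set X) : Prop :=
  (forall x y, C x -> C y -> C (x + y)) /\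
  (forall (a : R) x, 0 <= a -> C x -> C (a *: x)) /\
  convex_set (C : set (convex_lmodType X)).
End RieszDefs.

Section DualDefs.
Variables (R : realType) (X : topologicalLmodType R).

Definition locally_convex_solid (le : X -> X -> Prop) (join : X -> X -> X) : Prop :=
  forall U, nbhs (0 : X) U ->
    exists V : set X, [/\ nbhs (0 : X) V, convex_set (V : set (convex_lmodType X)),
                          solid le join V & V `<=` U].

Definition topdual : set (X -> R) := [set f : X -> R | scalar f /\ continuous (f : X -> R)].

Definition dualpos (le : X -> X -> Prop) : set (X -> R) :=
  [set f | topdual f /\ forall x, le 0 x -> 0 <= f x].

Definition cone_gen (G : set (X -> R)) : set (X -> R) :=
  [set f | exists (n : nat) (c : 'I_n -> R) (g : 'I_n -> X -> R),
      [/\ forall i, 0 <= c i, forall i, G (g i) &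
          forall x, f x = \sum_(i < n) c i * g i x]].

Definition polar (C : set X) : set (X -> R) :=
  [set g | topdual g /\ forall x, C x -> g x <= 0].
End DualDefs.

From HB Require Import structures.
From mathcomp Require Import all_boot all_order all_algebra.
From mathcomp Require Import all_classical all_reals all_analysis.
From mathcomp Require Import ring lra.
Import Order.TTheory GRing.Theory Num.Theory numFieldTopology.Exports.
Local Open Scope classical_set_scope.
Local Open Scope ring_scope.
Set Implicit Arguments. Unset Strict Implicit. Unset Printing Implicit Defensive.

(* (ii) => (i): on a convex solid neighbourhood V where |f|, |g| < 1/2, for x in C
   with x^- in V we get f x = f x^+ - f x^- <= g x^+ - f x^- = g x + g x^- - f x^- <= 1.

   (i) => (ii): shrink V to a convex solid W on which |f| < 1, let N = |M| + 1 and
     s y = inf { N t - f p | y = c - p + w, c in C, p >= 0, t > 0, w in t W }.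
   This s is sublinear, and finite because s 0 >= 0: from c = p - w solidity gives
   (c/t)^- <= |w/t| in W, hence f (p/t) = f (c/t) + f (w/t) <= M + 1.  A linear
   g <= s (Hahn-Banach) is continuous because s <= N t on t W, and g <= s <= 0 on C,
   g (- x) <= s (- x) <= - f x for x >= 0.  Hahn-Banach itself is algebraic: by Zorn
   there is a sublinear functional minimal below p, and minimality forces linearity. *)

Section Sublinear.
Variables (R : realType) (X : lmodType R).

Definition sublinear (p : X -> R) :=
  (forall x y, p (x + y) <= p x + p y) /\
  (forall (a : R) x, 0 < a -> p (a *: x) <= a * p x).

Lemma sublinear0 p : sublinear p -> p 0 = 0.
Proof.
move=> [pD pZ]; have := pD 0 0; have := pZ 2^-1 0; rewrite invr_gt0 addr0 scaler0.
by move=> /(_ (ltr0Sn _ 1)); lra.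
Qed.

Lemma sublinearN_le p x : sublinear p -> - p (- x) <= p x.
Proof. by move=> sp; have := sp.1 x (- x); rewrite subrr sublinear0 //; lra. Qed.

Lemma sublinearZ p a x : sublinear p -> 0 <= a -> p (a *: x) = a * p x.
Proof.
move=> sp; rewrite le_eqVlt => /predU1P[<-|a0]; first by rewrite scale0r mul0r sublinear0.
apply/eqP; rewrite eq_le sp.2 //= -ler_pdivlMl //.
by have := sp.2 a^-1 (a *: x); rewrite invr_gt0 scalerA mulVf ?gt_eqF // scale1r; apply.
Qed.

Lemma sublinear_inf (E : X -> set R) :
  (forall x, E x !=set0) -> (forall x, has_lbound (E x)) ->
  (forall x y e1 e2, E x e1 -> E y e2 -> exists2 e, E (x + y) e & e <= e1 + e2) ->
  (forall a x e, 0 < a -> E x e -> exists2 e', E (a *: x) e' & e' <= a * e) ->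
  sublinear (fun x => inf (E x)).
Proof.
move=> En Elb ED EZ.
have infE_le x e : E x e -> inf (E x) <= e by move=> Ee; exact: ge_inf.
have le_infE x r : (forall e, E x e -> r <= e) -> r <= inf (E x).
  by move=> H; apply: lb_le_inf.
split=> [x y|a x a0].
- have H e1 e2 : E x e1 -> E y e2 -> inf (E (x + y)) <= e1 + e2.
    by move=> /ED Ee1 /Ee1[e Ee e_le]; exact: le_trans (infE_le _ _ Ee) e_le.
  rewrite -lerBlDl; apply: (le_infE) => e2 Ee2; rewrite lerBlDl -lerBlDr.
  by apply: (le_infE) => e1 Ee1; rewrite lerBlDr; exact: H.
- rewrite -ler_pdivrMl //; apply: (le_infE) => e Ee; rewrite ler_pdivrMl //.
  by have [e' Ee' e'_le] := EZ a x e a0 Ee; exact: le_trans (infE_le _ _ Ee') e'_le.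
Qed.

Lemma sublinear_inf_chain (I : Type) (A : set I) (r : I -> X -> R) :
  A !=set0 -> (forall i, A i -> sublinear (r i)) ->
  (forall i j, A i -> A j -> (forall x, r j x <= r i x) \/ (forall x, r i x <= r j x)) ->
  (forall x, has_lbound [set r i x | i in A]) ->
  sublinear (fun x => inf [set r i x | i in A]).
Proof.
move=> [i0 Ai0] rsub rtot rlb.
apply: (@sublinear_inf (fun x => [set r i x | i in A])) => //.
- by move=> x; exists (r i0 x), i0.
- move=> x y _ _ [i Ai <-] [j Aj <-].
  have [rji|rij] := rtot i j Ai Aj.
  + exists (r j (x + y)); first by exists j.
    by apply: le_trans ((rsub j Aj).1 x y) _; rewrite lerD2r.
  + exists (r i (x + y)); first by exists i.
    by apply: le_trans ((rsub i Ai).1 x y) _; rewrite lerD2l.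
- move=> a x _ a0 [i Ai <-].
  by exists (r i (a *: x)); [exists i | exact: (rsub i Ai).2].
Qed.

Definition minimal_sublinear (q : X -> R) :=
  sublinear q /\
  forall r, sublinear r -> (forall x, r x <= q x) -> forall x, q x <= r x.

Lemma exists_minimal_sublinear p : sublinear p ->
  exists2 q, minimal_sublinear q & forall x, q x <= p x.
Proof.
move=> sp.
pose T := {q : X -> R | sublinear q /\ forall x, q x <= p x}.
pose below (q r : T) := `[< forall x, sval r x <= sval q x >].
have [q qmax] : exists q, premaximal below q.
  apply: (ZL_preorder (exist _ p (conj sp (fun x => lexx _)))).
  - by move=> q; apply/asboolP.
  - by move=> q r s /asboolP qr /asboolP rs; apply/asboolP => x; exact: le_trans (rs x) (qr x).
  move=> A Atot; have [->|A0] := eqVneq A set0.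
    by exists (exist _ p (conj sp (fun x => lexx _))).
  have /set0P[q0 Aq0] := A0; pose E x := [set sval r x | r in A].
  have Elb x : has_lbound (E x).
    exists (- p (- x)) => _ [r _ <-]; have [sr rp] := svalP r.
    by apply: le_trans (sublinearN_le x sr); rewrite lerN2.
  have sinf : sublinear (fun x => inf (E x)).
    apply: sublinear_inf_chain Elb => [|r _|r1 r2 A1 A2].
    - exact/set0P.
    - exact: (svalP r).1.
    - by case: (Atot _ _ A1 A2) => /asboolP; [left | right].
  have infE_le r x : A r -> inf (E x) <= sval r x by move=> Ar; apply: ge_inf; last exists r.
  have infp x : inf (E x) <= p x by apply: le_trans (infE_le _ _ Aq0) ((svalP q0).2 x).
  exists (exist _ (fun x => inf (E x)) (conj sinf infp)) => r Ar.
  by apply/asboolP => x; exact: infE_le.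
have [sq qp] := svalP q; exists (sval q) => //; split=> // r sr rq x.
have rp y : r y <= p y by exact: le_trans (rq y) (qp y).
by have /asboolP := qmax (exist _ r (conj sr rp)) (asboolT rq); apply.
Qed.

(* [x |-> inf_(t >= 0) q (x + t a) - t q a] is sublinear and below [q], hence
   equal to [q]; at [x = - a] this gives [q (- a) <= - q a]. *)
Lemma minimal_sublinearN q a : minimal_sublinear q -> q (- a) = - q a.
Proof.
move=> [sq qmin]; have q0 := sublinear0 sq.
pose F x := [set q (x + t *: a) - t * q a | t in [set t : R | 0 <= t]].
have Fn x : F x !=set0 by exists (q (x + 0 *: a) - 0 * q a); exists 0 => /=.
have Flb x : has_lbound (F x).
  exists (- q (- x)) => _ [t t0 <-]; rewrite -(sublinearZ a sq t0).
  by have := sq.1 (x + t *: a) (- x); rewrite addrC addKr; lra.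
have FD x y e1 e2 : F x e1 -> F y e2 -> exists2 e, F (x + y) e & e <= e1 + e2.
  move=> [s s0 <-] [t t0 <-]; exists (q (x + y + (s + t) *: a) - (s + t) * q a).
    by exists (s + t) => //; exact: addr_ge0.
  by rewrite scalerDl addrACA; have := sq.1 (x + s *: a) (y + t *: a); lra.
have FZ b x e : 0 < b -> F x e -> exists2 e', F (b *: x) e' & e' <= b * e.
  move=> b0 [t t0 <-]; exists (q (b *: x + (b * t) *: a) - (b * t) * q a).
    by exists (b * t) => //; exact: mulr_ge0 (ltW b0) t0.
  by rewrite -scalerA -scalerDr mulrBr mulrA lerD2r; exact: sq.2.
have sinf := sublinear_inf Fn Flb FD FZ.
have infF_le x t : 0 <= t -> inf (F x) <= q (x + t *: a) - t * q a.
  by move=> t0; apply: ge_inf; last exists t.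
have infq x : inf (F x) <= q x.
  by have := infF_le x 0 (lexx _); rewrite scale0r addr0 mul0r subr0.
have := qmin _ sinf infq (- a); have := infF_le (- a) 1 ler01.
rewrite scale1r addNr q0 mul1r sub0r; have := sublinearN_le a sq; lra.
Qed.

Lemma minimal_sublinear_scalar q : minimal_sublinear q -> scalar q.
Proof.
move=> mq; have [sq _] := mq; have qN := minimal_sublinearN _ mq.
have qD x y : q (x + y) = q x + q y.
  by apply/eqP; rewrite eq_le sq.1 /=; have := sq.1 (- x) (- y); rewrite -opprD !qN; lra.
move=> c u v; rewrite qD; congr (_ + _).
have [c0|c0] := leP 0 c; first exact: sublinearZ.
have Nc0 : 0 <= - c by rewrite oppr_ge0 ltW.
by rewrite -[c *: u]opprK -scaleNr qN sublinearZ // mulNr opprK.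
Qed.

Theorem hahn_banach p : sublinear p -> exists2 k, scalar k & forall x, k x <= p x.
Proof.
by move=> /exists_minimal_sublinear[q /minimal_sublinear_scalar qlin qp]; exists q.
Qed.

End Sublinear.

Section ScalarFunctional.
Variables (R : realType) (X : lmodType R) (f : X -> R).
Hypothesis hf : scalar f.

Lemma scalarf0 : f 0 = 0.
Proof. by have := hf 1 0 0; rewrite scale1r addr0 mul1r; lra. Qed.

Lemma scalarfD u v : f (u + v) = f u + f v.
Proof. by have := hf 1 u v; rewrite scale1r mul1r. Qed.

Lemma scalarfZ a u : f (a *: u) = a * f u.
Proof. by have := hf a u 0; rewrite !addr0 scalarf0 addr0. Qed.

Lemma scalarfN u : f (- u) = - f u.
Proof. by rewrite -scaleN1r scalarfZ mulN1r. Qed.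

End ScalarFunctional.

Section TopologicalLmodule.
Variables (R : realType) (X : topologicalLmodType R).

Lemma scale_continuousl (c : R) : continuous (fun y : X => c *: y).
Proof.
move=> y; apply: (@continuous_comp _ _ _ (fun y : X => ((c : R^o), y))
  (fun z : R^o * X => z.1 *: z.2)); last exact: scale_continuous.
exact: (cvg_pair (cvg_cst (c : R^o)) cvg_id).
Qed.

Lemma scale_continuousr (y : X) : continuous (fun r : R^o => r *: y).
Proof.
move=> r; apply: (@continuous_comp _ _ _ (fun r : R^o => (r, y))
  (fun z : R^o * X => z.1 *: z.2)); last exact: scale_continuous.
exact: (cvg_pair cvg_id (cvg_cst y)).
Qed.

Lemma nbhs0_scale (c : R) (U : set X) : nbhs 0 U -> nbhs 0 [set y | U (c *: y)].
Proof. by move=> U0; apply: (scale_continuousl (x := 0)); rewrite /= scaler0. Qed.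

Lemma nbhs0_absorbing (U : set X) (y : X) :
  nbhs 0 U -> exists2 t : R, 0 < t & U (t^-1 *: y).
Proof.
move=> U0; have /nbhs_norm0P[e /= e0 He] : nbhs (0 : R^o) [set r | U (r *: y)].
  by apply: (scale_continuousr (x := 0)); rewrite /= scale0r.
exists (e / 2)^-1; first by rewrite invr_gt0 divr_gt0.
by rewrite invrK; apply: He; rewrite /= ger0_norm ?divr_ge0 ?ltW //; lra.
Qed.

Lemma continuous_nbhs0_lt (f : X -> R) (e : R) :
  continuous f -> f 0 = 0 -> 0 < e -> nbhs 0 [set x | `|f x| < e].
Proof.
move=> fc f0 e0; apply: (fc 0 [set r : R | `|r| < e]).
by rewrite f0; exact: (@nbhs0_lt R R^o e e0).
Qed.

Lemma scalar_continuous (k : X -> R) : scalar k ->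
  (forall e, 0 < e -> nbhs 0 [set x | `|k x| < e]) -> continuous k.
Proof.
move=> klin k0 x; apply/cvgrPdist_lt => e e0.
have shift : (fun t => t - x) @ x --> (0 : X).
  rewrite -(subrr x); apply: (@continuous_comp _ _ _ (fun t => (t, x))
    (fun z : X * X => z.1 - z.2)); last exact: sub_continuous.
  exact: (cvg_pair cvg_id (cvg_cst x)).
have : nbhs x [set t | `|k (t - x)| < e] := shift _ (k0 e e0).
apply: filterS => t /=.
by rewrite -normrN opprB -scalarfN // -scalarfD // addrC.
Qed.

End TopologicalLmodule.

Section RieszSpace.
Variables (R : realType) (X : lmodType R) (le : X -> X -> Prop) (join : X -> X -> X).
Hypothesis hR : is_riesz_space le join.

Let le_anti : forall x y, le x y -> le y x -> x = y. Proof. by case: hR. Qed.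
Let le_trans : forall x y z, le x y -> le y z -> le x z. Proof. by case: hR => _ _ []. Qed.
Let le_add : forall x y z, le x y -> le (x + z) (y + z). Proof. by case: hR => _ _ []. Qed.
Let join_sup : forall x y, [/\ le x (join x y), le y (join x y) &
  forall z, le x z -> le y z -> le (join x y) z].
Proof. by case: hR. Qed.

Lemma riesz_lexx x : le x x. Proof. by case: hR => + _ _ _ _; apply. Qed.

Lemma riesz_addr_ge0 x y : le 0 x -> le 0 y -> le 0 (x + y).
Proof.
move=> x0 y0; apply: le_trans x0 _.
by have := le_add x y0; rewrite add0r addrC.
Qed.

Lemma riesz_scaler_ge0 (a : R) x : 0 <= a -> le 0 x -> le 0 (a *: x).
Proof. by case: hR => _ _ _ Z _ a0 /(Z _ _ _ a0); rewrite scaler0. Qed.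

Lemma riesz_oppr_le0 x : le 0 x -> le (- x) 0.
Proof. by move=> /(le_add (- x)); rewrite add0r subrr. Qed.

Lemma riesz_joinC x y : join x y = join y x.
Proof.
have [xj yj jmin] := join_sup x y; have [yj' xj' jmin'] := join_sup y x.
by apply: le_anti; [apply: jmin | apply: jmin'].
Qed.

Lemma riesz_addr_joinl x y z : join x y + z = join (x + z) (y + z).
Proof.
have [xj yj jmin] := join_sup x y; have [xzj yzj jmin'] := join_sup (x + z) (y + z).
apply: le_anti; last by apply: jmin'; apply: le_add.
rewrite -[join (x + z) _](subrK z); apply: le_add; apply: jmin.
- by have := le_add (- z) xzj; rewrite addrK.
- by have := le_add (- z) yzj; rewrite addrK.
Qed.

Lemma rpos_ge0 x : le 0 (rpos join x). Proof. by have [] := join_sup x 0. Qed.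

Lemma rneg_ge0 x : le 0 (rneg join x). Proof. by have [] := join_sup (- x) 0. Qed.

Lemma rpos_sub_rneg x : rpos join x - rneg join x = x.
Proof.
by apply/eqP; rewrite subr_eq addrC riesz_addr_joinl addNr add0r riesz_joinC.
Qed.

Lemma rabs_ge0 x : le 0 (rabs join x).
Proof.
have [xj Nxj _] := join_sup x (- x); rewrite /rabs; set r := join x (- x) in xj Nxj *.
have r2 : le 0 (r + r).
  apply: le_trans (_ : le 0 (r - x)) _; first by rewrite -(subrr x); apply: le_add.
  by rewrite addrC; apply: le_add.
have -> : r = 2^-1 *: (r + r).
  by rewrite scalerDr -scalerDl (_ : 2^-1 + 2^-1 = 1) ?scale1r //; field.
by apply: riesz_scaler_ge0 r2; rewrite invr_ge0.
Qed.

Lemma ger0_rabs x : le 0 x -> rabs join x = x.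
Proof.
move=> x0; have [xj _ jmin] := join_sup x (- x).
apply: le_anti => //; apply: jmin; first exact: riesz_lexx.
exact: le_trans (riesz_oppr_le0 x0) x0.
Qed.

Lemma rneg_subr_le_rabs p w : le 0 p -> le (rneg join (p - w)) (rabs join w).
Proof.
move=> p0; have [_ _ jmin] := join_sup (- (p - w)) 0.
apply: jmin; last exact: rabs_ge0.
rewrite opprB; apply: (@le_trans _ w); last by have [] := join_sup w (- w).
by have := le_add w (riesz_oppr_le0 p0); rewrite add0r addrC.
Qed.

End RieszSpace.

Lemma convex_scaled_add (R : realType) (X : lmodType R)
    (W : set (convex_lmodType X)) (s t : R) (u v : X) :
  convex_set W -> 0 < s -> 0 < t -> W (s^-1 *: u) -> W (t^-1 *: v) ->
  W ((s + t)^-1 *: (u + v)).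
Proof.
move=> Wc s_gt0 t_gt0 Wu Wv; have st_gt0 := addr_gt0 s_gt0 t_gt0.
have l0 : 0 <= s / (s + t) by rewrite divr_ge0 // ltW.
have l1 : s / (s + t) <= 1 by rewrite ler_pdivrMr // mul1r lerDl ltW.
suff -> : (s + t)^-1 *: (u + v) =
    (s / (s + t)) *: (s^-1 *: u) + (1 - s / (s + t)) *: (t^-1 *: v).
  by have := Wc _ _ (Itv01 l0 l1) (mem_set Wu) (mem_set Wv); rewrite inE.
by rewrite !scalerA scalerDr; congr (_ *: _ + _ *: _); field; rewrite !gt_eqF.
Qed.

Section BoundedPolarMajorant.
Variables (R : realType) (X : topologicalLmodType R).
Variables (le : X -> X -> Prop) (join : X -> X -> X).
Hypothesis hR : is_riesz_space le join.
Variable C : set X.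
Hypotheses (hC : convex_cone C) (C0 : C 0).
Variable f : X -> R.
Hypothesis hf : scalar f.
Variable W : set X.
Hypotheses (W0 : nbhs 0 W) (Wc : convex_set (W : set (convex_lmodType X)))
  (Ws : solid le join W) (Wf : forall w, W w -> `|f w| < 1).
Variable M : R.
Hypothesis fM : forall x, C x -> W (rneg join x) -> f x <= M.

Let N := `|M| + 1.

Let N_gt0 : 0 < N. Proof. by rewrite ltr_wpDl. Qed.

Lemma cone_decomposition_bound c p w : C c -> le 0 p -> W w -> c = p - w -> f p <= N.
Proof.
move=> Cc p0 Ww cE.
have : W (rneg join c).
  apply: Ws Ww _; rewrite (ger0_rabs hR (rneg_ge0 hR _)) cE.
  exact: rneg_subr_le_rabs.
move=> /(fM Cc); have /ltr_normlP[_ fw] := Wf Ww.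
have : f p = f c + f w by rewrite cE -scalarfD // subrK.
rewrite /N; have := ler_norm M; lra.
Qed.

Definition gauge_set y := [set e | exists c p w t,
  [/\ C c, le 0 p, 0 < t, W (t^-1 *: w) & y = c - p + w] /\ e = N * t - f p].

Lemma gauge_setD y1 y2 e1 e2 :
  gauge_set y1 e1 -> gauge_set y2 e2 -> gauge_set (y1 + y2) (e1 + e2).
Proof.
move=> [c1 [p1 [w1 [t1 [[C1 p1_ge0 t1_gt0 W1 ->] ->]]]]].
move=> [c2 [p2 [w2 [t2 [[C2 p2_ge0 t2_gt0 W2 ->] ->]]]]].
have t12_gt0 := addr_gt0 t1_gt0 t2_gt0.
exists (c1 + c2), (p1 + p2), (w1 + w2), (t1 + t2); split; first split.
- exact: hC.1.
- by have := riesz_addr_ge0 hR p1_ge0 p2_ge0.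
- exact: t12_gt0.
- exact: convex_scaled_add Wc t1_gt0 t2_gt0 W1 W2.
- by rewrite opprD addrACA [c1 - p1 + _]addrACA.
- by rewrite (scalarfD hf); ring.
Qed.

Lemma gauge_setZ a y e : 0 < a -> gauge_set y e -> gauge_set (a *: y) (a * e).
Proof.
move=> a_gt0 [c [p [w [t [[Cc p_ge0 t_gt0 Wt ->] ->]]]]].
exists (a *: c), (a *: p), (a *: w), (a * t); split; first split.
- by have := hC.2.1 a c (ltW a_gt0) Cc.
- by have := riesz_scaler_ge0 hR (ltW a_gt0) p_ge0.
- exact: mulr_gt0.
- by rewrite scalerA invfM mulrAC mulVf ?gt_eqF // mul1r.
- by rewrite scalerDr scalerBr.
- by rewrite (scalarfZ hf); ring.
Qed.

Lemma gauge_set_witness c p w t :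
  C c -> le 0 p -> 0 < t -> W (t^-1 *: w) -> gauge_set (c - p + w) (N * t - f p).
Proof. by move=> Cc p0 t0 Wt; exists c, p, w, t. Qed.

Lemma gauge_set_neq0 y : gauge_set y !=set0.
Proof.
have [t t_gt0 Wt] := nbhs0_absorbing y W0.
exists (N * t - f 0); have := gauge_set_witness C0 (riesz_lexx hR 0) t_gt0 Wt.
by rewrite subrr add0r.
Qed.

Lemma gauge_set0_ge0 e : gauge_set 0 e -> 0 <= e.
Proof.
move=> [c [p [w [t [[Cc p_ge0 t_gt0 Wt cpw] ->]]]]].
have tV_ge0 : 0 <= t^-1 by rewrite invr_ge0 ltW.
have cE : c = p - w by apply/eqP; rewrite -subr_eq0 opprB addrA addrAC -cpw.
have : f (t^-1 *: p) <= N.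
  apply: (cone_decomposition_bound (c := t^-1 *: c) (w := t^-1 *: w)) => //.
  - by have := hC.2.1 _ _ tV_ge0 Cc.
  - by have := riesz_scaler_ge0 hR tV_ge0 p_ge0.
  - by rewrite cE scalerBr.
by rewrite (scalarfZ hf) ler_pdivrMl // subr_ge0 mulrC.
Qed.

Lemma gauge_set_lbound y : has_lbound (gauge_set y).
Proof.
have [e' Ee'] := gauge_set_neq0 (- y); exists (- e') => e Ee.
by have := gauge_setD Ee Ee'; rewrite subrr => /gauge_set0_ge0; lra.
Qed.

Definition gauge y := inf (gauge_set y).

Lemma gauge_sublinear : sublinear gauge.
Proof.
apply: sublinear_inf gauge_set_neq0 gauge_set_lbound _ _.
- by move=> x y e1 e2 E1 E2; exists (e1 + e2) => //; exact: gauge_setD.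
- by move=> a x e a_gt0 Ee; exists (a * e) => //; exact: gauge_setZ.
Qed.

Lemma gauge_le y e : gauge_set y e -> gauge y <= e.
Proof. by move=> Ee; apply: ge_inf Ee; exact: gauge_set_lbound. Qed.

Lemma gauge_le_scaled y t : 0 < t -> W (t^-1 *: y) -> gauge y <= N * t.
Proof.
move=> t_gt0 Wy; have := gauge_le (gauge_set_witness C0 (riesz_lexx hR 0) t_gt0 Wy).
by rewrite subrr add0r (scalarf0 hf) subr0.
Qed.

Lemma gauge_set_sub_witness c p e : C c -> le 0 p -> 0 < e -> gauge_set (c - p) (e - f p).
Proof.
move=> Cc p_ge0 e_gt0; have t_gt0 : 0 < e / N by rewrite divr_gt0.
have W0' : W ((e / N)^-1 *: 0) by rewrite scaler0; exact: nbhs_singleton.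
have := gauge_set_witness Cc p_ge0 t_gt0 W0'.
by rewrite addr0 mulrC divfK ?gt_eqF.
Qed.

Lemma gauge_cone_le0 x : C x -> gauge x <= 0.
Proof.
move=> Cx; apply/ler_addgt0Pr => e e_gt0; rewrite add0r.
have := gauge_le (gauge_set_sub_witness Cx (riesz_lexx hR 0) e_gt0).
by rewrite subr0 (scalarf0 hf) subr0.
Qed.

Lemma gauge_oppr_pos x : le 0 x -> gauge (- x) <= - f x.
Proof.
move=> x_ge0; apply/ler_addgt0Pr => e e_gt0.
have := gauge_le (gauge_set_sub_witness C0 x_ge0 e_gt0).
by rewrite sub0r addrC.
Qed.

Lemma bounded_polar_majorant : exists g, polar C g /\ forall x, le 0 x -> f x <= g x.
Proof.
have [k klin k_le] := hahn_banach gauge_sublinear.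
exists k; split; first split; first split => //.
- apply: (scalar_continuous klin) => e e_gt0; pose t := e / (2 * N).
  have t_gt0 : 0 < t by rewrite divr_gt0 // mulr_gt0.
  have Nt : N * t = e / 2 by rewrite /t; field; rewrite gt_eqF.
  apply: filterS (filterI (nbhs0_scale t^-1 W0) (nbhs0_scale (- t^-1) W0)).
  move=> y /= [Wy WNy]; have ky := le_trans (k_le y) (gauge_le_scaled t_gt0 Wy).
  have : W (t^-1 *: - y) by rewrite scalerN -scaleNr.
  move=> /(gauge_le_scaled t_gt0) /(le_trans (k_le _)); rewrite (scalarfN klin) => kNy.
  by rewrite ltr_norml; apply/andP; split; lra.
- by move=> x Cx; exact: le_trans (k_le x) (gauge_cone_le0 Cx).
- by move=> x x_ge0; have := le_trans (k_le _) (gauge_oppr_pos x_ge0); rewrite (scalarfN klin); lra.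
Qed.

End BoundedPolarMajorant.

Lemma polar_majorant_bounded (R : realType) (X : topologicalLmodType R)
    (le : X -> X -> Prop) (join : X -> X -> X) (C : set X) (f g : X -> R) :
  is_riesz_space le join -> locally_convex_solid le join ->
  topdual f -> polar C g -> (forall x, le 0 x -> f x <= g x) ->
  exists V : set X,
    [/\ nbhs (0 : X) V, convex_set (V : set (convex_lmodType X)),
        solid le join V &
        exists M : R, forall x, C x -> V (rneg join x) -> f x <= M].
Proof.
move=> hR hlcs [fs fc] [[gs gc] gC] fg.
have half_gt0 : (0 : R) < 2^-1 by rewrite invr_gt0.
have /hlcs[V [V0 Vc Vs VU]] :
    nbhs (0 : X) ([set x | `|g x| < 2^-1] `&` [set x | `|f x| < 2^-1]).
  by apply: filterI; apply: continuous_nbhs0_lt; rewrite // scalarf0.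
exists V; split => //; exists 1 => x Cx /VU[/= /ltr_normlP[_ gn] /ltr_normlP[fn _]].
have gx := gC x Cx; have fgx := fg _ (rpos_ge0 hR x).
have fx : f x = f (rpos join x) - f (rneg join x).
  by rewrite -scalarfN // -scalarfD // (rpos_sub_rneg hR).
have gx_pos : g (rpos join x) = g x + g (rneg join x).
  by rewrite -scalarfD // -{2}(rpos_sub_rneg hR x) subrK.
lra.
Qed.

Theorem theorem1 (R : realType) (X : topologicalLmodType R)
  (le : X -> X -> Prop) (join : X -> X -> X)
  (hR : is_riesz_space le join)
  (hlcs : locally_convex_solid le join)
  (Gamma : set (X -> R))
  (hGpos : Gamma `<=` dualpos le)
  (hGcpt : compact (Gamma : set {ptws X -> R}))
  (hGdense : dualpos le `<=` closure (cone_gen Gamma : set {ptws X -> R}))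
  (C : set X) (hC : convex_cone C) (hCX : C `&` poscone le = [set 0])
  (f : X -> R) (hf : topdual f) :
  (exists V : set X,
      [/\ nbhs (0 : X) V, convex_set (V : set (convex_lmodType X)),
          solid le join V &
          exists M : R, forall x, C x -> V (rneg join x) -> f x <= M])
  <->
  (exists g, polar C g /\ forall x, le 0 x -> f x <= g x).
Proof.
have [C0 _] : (C `&` poscone le) 0 by rewrite hCX.
have [flin fcont] := hf.
split=> [[V [V0 _ _ [M fM]]]|[g [gC fg]]]; last first.
  by have := polar_majorant_bounded hR hlcs hf gC fg.
have /hlcs[W [W0 Wc Ws WV]] : nbhs (0 : X) (V `&` [set x | `|f x| < 1]).
  by apply: filterI => //; apply: continuous_nbhs0_lt; rewrite ?scalarf0.
have Wf w : W w -> `|f w| < 1 by move=> /WV[].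
have WM x : C x -> W (rneg join x) -> f x <= M by move=> Cx /WV[Vx _]; exact: fM.
by have := bounded_polar_majorant hR hC C0 flin W0 Wc Ws Wf WM.
Qed.
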